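(* Let $R$ be a commutative ring with identity, $I$ an ideal of $R$ and $M$ an $R$-module. If $M$ is $I$-prime, then the submodule $\Gamma_I(M)$ of $M$ is an $I$-coprime $R$-module. If $M$ is $I$-coprime, then the $R$-module $\Lambda_I(M)$ is an $I$-prime $R$-module.
   Context: All rings are commutative with identity and modules are unital. An $R$-module $M$ is $I$-prime if for all $m\in M$, $Im=0$ implies $m=0$ or $IM=0$; it is $I$-coprime if $IM=0$ or $IM=M$. $\Gamma_I(M)=\{m\in M : I^k m=0 \text{ for some } k\geq 1\}$ and $\Lambda_I(M)=\varprojlim_k M/I^kM$. *)

From mathcomp Require Import all_boot all_algebra.
From mathcomp Require Import functions.
Set Implicit Arguments. Unset Strict Implicit. Unset Printing Implicit Defensive.
Import GRing.Theory.
Local Open Scope ring_scope.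

Definition is_ideal (R : comPzRingType) (I : R -> Prop) : Prop :=
  [/\ I 0, (forall a b, I a -> I b -> I (a + b)) &
      (forall r a, I a -> I (r * a))].

Definition idealX (R : comPzRingType) (I : R -> Prop) (k : nat) : R -> Prop :=
  fun x => exists n (r : 'I_n -> R) (a : 'I_n -> 'I_k -> R),
    (forall i j, I (a i j)) /\ x = \sum_(i < n) r i * \prod_(j < k) a i j.

Definition idealmul (R : comPzRingType) (V : lmodType R)
  (J : R -> Prop) (C : V -> Prop) : V -> Prop :=
  fun w => exists n (a : 'I_n -> R) (c : 'I_n -> V),
    (forall i, J (a i)) /\ (forall i, C (c i)) /\ w = \sum_(i < n) a i *: c i.

(* I-prime / I-coprime for a subquotient C/N of a module V, where N <= C are
   submodules of V (elements of C/N are represented by elements of C; the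
   zero submodule of C/N corresponds to N). *)
Definition Iprime_sq (R : comPzRingType) (V : lmodType R)
  (I : R -> Prop) (C N : V -> Prop) : Prop :=
  forall v, C v ->
    (forall a, I a -> N (a *: v)) ->            (* I v = 0 in C/N *)
    N v \/ (forall w, idealmul I C w -> N w).   (* v = 0 or I (C/N) = 0 *)

Definition Icoprime_sq (R : comPzRingType) (V : lmodType R)
  (I : R -> Prop) (C N : V -> Prop) : Prop :=
  (forall w, idealmul I C w -> N w)                       (* I (C/N) = 0 *)
  \/ (forall v, C v -> exists w, idealmul I C w /\ N (v - w)). (* I (C/N) = C/N *)

Definition Iprime (R : comPzRingType) (M : lmodType R) (I : R -> Prop) :=
  Iprime_sq I (fun _ : M => True) (fun m => m = 0).
Definition Icoprime (R : comPzRingType) (M : lmodType R) (I : R -> Prop) :=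
  Icoprime_sq I (fun _ : M => True) (fun m => m = 0).

Definition Gamma (R : comPzRingType) (M : lmodType R) (I : R -> Prop) : M -> Prop :=
  fun m => exists k, (1 <= k)%N /\ forall a, idealX I k a -> a *: m = 0.

Definition IkM (R : comPzRingType) (M : lmodType R) (I : R -> Prop) (k : nat)
  : M -> Prop := idealmul (idealX I k) (fun _ : M => True).

(* Lambda_I(M) = lim_k M/I^k M (k >= 1), realised as the subquotient
   LamC/LamN of the module nat -> M: a compatible family (x_k mod I^k M)_k is
   represented by a sequence x of elements of M with x_(k+1) - x_k in I^k M,
   and two representatives define the same element iff their difference lies
   in LamN = { x | x_k in I^k M for all k >= 1 }. *)
Definition LamC (R : comPzRingType) (M : lmodType R) (I : R -> Prop)
  : (nat -> M) -> Prop :=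
  fun x => forall k, (1 <= k)%N -> IkM I k (x k.+1 - x k).
Definition LamN (R : comPzRingType) (M : lmodType R) (I : R -> Prop)
  : (nat -> M) -> Prop :=
  fun x => forall k, (1 <= k)%N -> IkM I k (x k).

(* If M is I-prime, every m with I^k m = 0 is already killed by I: for b in I
   the element b m is killed by I^(k-1), hence by I (induction on k), hence
   b m = 0 by I-primality, or because IM = 0.  Thus I Gamma_I(M) = 0.
   If M is I-coprime, either IM = 0, and then I kills every compatible family,
   or IM = M, and then I^k M = M for all k, so Lambda_I(M) = 0; either way
   Lambda_I(M) is I-prime. *)
From mathcomp Require Import all_boot all_algebra.
From mathcomp Require Import functions.
Set Implicit Arguments. Unset Strict Implicit. Unset Printing Implicit Defensive.
Import GRing.Theory.
Local Open Scope ring_scope.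

Section IdealMul.
Variables (R : comPzRingType) (V : lmodType R).
Implicit Types (J K : R -> Prop) (C : V -> Prop).

Lemma idealmul0 J C : idealmul J C 0.
Proof.
exists 0%N, (fun _ => 0), (fun _ => 0).
by split; [case | split; [case | rewrite big_ord0]].
Qed.

Lemma idealmulZ J C a c : J a -> C c -> idealmul J C (a *: c).
Proof.
move=> Ja Cc; exists 1%N, (fun _ => a), (fun _ => c).
by split=> //; split=> //; rewrite big_ord1.
Qed.

Lemma idealmulD J C w1 w2 :
  idealmul J C w1 -> idealmul J C w2 -> idealmul J C (w1 + w2).
Proof.
move=> [n1 [a1 [c1 [J1 [C1 ->]]]]] [n2 [a2 [c2 [J2 [C2 ->]]]]].
exists (n1 + n2)%N,
  (fun i => match fintype.split i with inl j => a1 j | inr j => a2 j end),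
  (fun i => match fintype.split i with inl j => c1 j | inr j => c2 j end).
split; first by move=> i; case: (fintype.split i).
split; first by move=> i; case: (fintype.split i).
rewrite big_split_ord; congr (_ + _); apply: eq_bigr => i _.
- by rewrite (unsplitK (inl i)).
- by rewrite (unsplitK (inr i)).
Qed.

Lemma idealmul_sum J C n (F : 'I_n -> V) :
  (forall i, idealmul J C (F i)) -> idealmul J C (\sum_(i < n) F i).
Proof.
elim: n F => [|n IHn] F JCF; first by rewrite big_ord0; apply: idealmul0.
by rewrite big_ord_recr; apply: idealmulD => //; apply: IHn.
Qed.

Lemma idealmulS J C C' w :
  (forall c, C c -> C' c) -> idealmul J C w -> idealmul J C' w.
Proof.
move=> CC' [n [a [c [Ja [Cc ->]]]]].
by exists n, a, c; split=> //; split=> // i; apply: CC'.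
Qed.

Lemma idealmul_comp J J' K C w :
  (forall a b, J a -> J' b -> K (a * b)) ->
  idealmul J (idealmul J' C) w -> idealmul K C w.
Proof.
move=> JJ'K [n [a [c [Ja [J'Cc ->]]]]].
apply: idealmul_sum => i; have [m [b [d [J'b [Cd ->]]]]] := J'Cc i.
rewrite scaler_sumr; apply: idealmul_sum => j.
by rewrite scalerA; apply: idealmulZ => //; apply: JJ'K.
Qed.

End IdealMul.

Section IdealPower.
Variables (R : comPzRingType) (I : R -> Prop).

Lemma idealX0 : idealX I 0 1.
Proof.
exists 1%N, (fun _ => 1), (fun _ _ => 0); split; first by move=> ? [].
by rewrite big_ord1 big_ord0 mulr1.
Qed.

Lemma idealXSr k x b : idealX I k x -> I b -> idealX I k.+1 (x * b).
Proof.
move=> [n [r [a [Ia ->]]]] Ib.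
exists n, r, (fun i j => if unlift ord_max j is Some j' then a i j' else b).
split; first by move=> i j; case: (unlift ord_max j).
rewrite mulr_suml; apply: eq_bigr => i _.
rewrite big_ord_recr /= unlift_none -mulrA; congr (_ * (_ * _)).
apply: eq_bigr => j _.
have -> : widen_ord (leqnSn k) j = lift ord_max j.
  by apply: val_inj; rewrite /= /bump leqNgt ltn_ord.
by rewrite liftK.
Qed.

Lemma idealmul_IkM (M : lmodType R) k (m : M) :
  idealmul I (IkM I k) m -> IkM I k.+1 m.
Proof.
by apply: idealmul_comp => a b Ia Ikb; rewrite mulrC; apply: idealXSr.
Qed.

End IdealPower.

Section PrimeTorsion.
Variables (R : comPzRingType) (M : lmodType R) (I : R -> Prop).
Hypothesis M_Iprime : Iprime M I.

Lemma Iprime_scale_eq0 b (m : M) :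
  I b -> (forall a, I a -> a *: (b *: m) = 0) -> b *: m = 0.
Proof.
move=> Ib Ibm; case: (M_Iprime Logic.I Ibm) => // IM0.
exact/IM0/idealmulZ.
Qed.

Lemma Iprime_Gamma_annihilated a (m : M) : I a -> Gamma I m -> a *: m = 0.
Proof.
move=> Ia [k [_ Ikm]]; elim: k m Ikm a Ia => [|k IHk] m Ikm a Ia.
  by rewrite -[m]scale1r Ikm ?scaler0 //; apply: idealX0.
apply: Iprime_scale_eq0 => //; apply: IHk => x Ikx.
by rewrite scalerA; apply/Ikm/idealXSr.
Qed.

End PrimeTorsion.

Section CoprimeCompletion.
Variables (R : comPzRingType) (M : lmodType R) (I : R -> Prop).

Lemma LamN_of_annihilated (C : (nat -> M) -> Prop) x :
  (forall w, idealmul I (fun _ : M => True) w -> w = 0) ->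
  idealmul I C x -> LamN I x.
Proof.
move=> IM0 [n [a [c [Ia [_ ->]]]]] k _; rewrite fct_sumE big1 => [|i _].
  exact: idealmul0.
by rewrite scalrfctE; apply/IM0/idealmulZ.
Qed.

Lemma IkM_full :
  (forall m : M, idealmul I (fun _ => True) m) -> forall k (m : M), IkM I k m.
Proof.
move=> IMM; elim=> [|k IHk] m.
  by rewrite -[m]scale1r; apply: idealmulZ => //; apply: idealX0.
by apply: idealmul_IkM; apply: idealmulS (IMM m) => c _; apply: IHk.
Qed.

End CoprimeCompletion.

Theorem mainTheorem3 (R : comPzRingType) (M : lmodType R) (I : R -> Prop)
  (hI : is_ideal I) :
  (@Iprime R M I -> Icoprime_sq I (@Gamma R M I) (fun m : M => m = 0)) /\
  (@Icoprime R M I -> Iprime_sq I (@LamC R M I) (@LamN R M I)).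
Proof.
split.
- move=> M_Iprime; left => w [n [a [c [Ia [Gc ->]]]]].
  by apply: big1 => i _; apply: (Iprime_Gamma_annihilated M_Iprime).
- case=> [IM0 | IMM] x _ _.
  + by right => w; apply: LamN_of_annihilated.
  + left => k _; apply: IkM_full => m.
    by have [w [IMw /eqP]] := IMM m Logic.I; rewrite subr_eq0 => /eqP ->.
Qed.
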